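(* Let $q \ge 2$ and $r \ge 3$ be integers. For $n \ge 1$ let $g^{q\text{-}\mathrm{ff}}_r(n)$ be the maximum cardinality of a family $\mathcal{F} \subseteq [q]^n$ containing no $q$-ary focal family of size $r$. Then there is a positive constant $c^{q\text{-}\mathrm{ff}}_r$ (depending only on $q$ and $r$) such that for every $n$, $$c^{q\text{-}\mathrm{ff}}_r \left(\frac{q}{((q-1)(r-1)+1)^{1/(r-1)}}\right)^n \le g^{q\text{-}\mathrm{ff}}_r(n) \le (r-1)\, q^{\lceil \frac{(r-2)n}{r-1} \rceil}.$$
   Context: Here $[q]=\{1,\dots,q\}$. A family $x^{(0)}, x^{(1)}, \dots, x^{(r-1)}$ of $r$ distinct vectors in $[q]^n$ is a ($q$-ary) focal family with focus $x^{(0)}$ if for every coordinate $i \in [n]$, at least $r-2$ of the $r-1$ entries $x^{(1)}_i, \dots, x^{(r-1)}_i$ are equal to $x^{(0)}_i$. A family contains a focal family of size $r$ if some $r$ distinct members, with some choice of focus among them, form a focal family. *)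

From mathcomp Require Import all_boot.
Set Implicit Arguments. Unset Strict Implicit. Unset Printing Implicit Defensive.

(* [q]^n, with [q] = {1..q} represented by 'I_q = {0..q-1}. *)
Definition vec (q n : nat) := {ffun 'I_n -> 'I_q}.

(* x0 together with y_1..y_{r-1} (indexed by 'I_(r-1)) is a focal family of
   r distinct vectors with focus x0: all r vectors distinct, and for every
   coordinate i at least r-2 of the y_j agree with x0 at i. *)
Definition focalb (q n r : nat) (x0 : vec q n) (y : {ffun 'I_(r-1) -> vec q n}) : bool :=
  [&& injectiveb y, [forall j, y j != x0] &
      [forall i : 'I_n, r - 2 <= #|[set j : 'I_(r-1) | y j i == x0 i]| ]].

Definition contains_focal (q n r : nat) (F : {set vec q n}) : bool :=
  [exists x0 : vec q n, exists y : {ffun 'I_(r-1) -> vec q n},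
     [&& x0 \in F, [forall j, y j \in F] & focalb x0 y]].

Definition g_ff (q r n : nat) : nat :=
  \max_(F : {set vec q n} | ~~ contains_focal r F) #|F|.

Definition ceil_div (a b : nat) : nat := (a + b - 1) %/ b.

(* Upper bound: split the coordinates into the r - 1 residue classes modulo r - 1.  If every
   class j contained the whole disagreement of x with some other member y_j of F, the y_j
   would form a focal family with focus x, since at each coordinate only the y_j of that
   coordinate's class may differ from x.  So each x in F is the only member of F agreeing
   with it off some class j, and is determined by j and by its restriction to the other
   coordinates: |F| <= (r - 1) q^(n - floor(n/(r-1))).

   Lower bound, by deletion: a focal configuration (x0, y) is determined by x0 and, at each
   coordinate, by which y_j (if any) deviates from x0 and its value there, so there are at
   most q^n K^n of them, K = (q - 1)(r - 1) + 1.  An average m-subset of [q]^n contains at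
   most a fraction (m/q^n)^r of them; deleting their foci from a subset that does no worse
   than average leaves a focal-free family of size >= m/2 as soon as
   2 K^n m^(r-1) <= q^(n(r-1)).  Choosing m maximal gives the exponential lower bound. *)

From mathcomp Require Import all_boot zify.
Set Implicit Arguments. Unset Strict Implicit. Unset Printing Implicit Defensive.

Lemma bin_subn_mul_expn_leq N m k : k <= m -> m <= N ->
  'C(N - k, m - k) * N ^ k <= 'C(N, m) * m ^ k.
Proof.
elim: k => [|k IHk] lt_km le_mN; first by rewrite !subn0 !expn0 !muln1.
have {}IHk := IHk (ltnW lt_km) le_mN.
have step : 'C(N - k.+1, m - k.+1) * N <= m * 'C(N - k, m - k).
  have := mul_bin_diag (N - k) (m - k.+1).
  have -> : (N - k).-1 = N - k.+1 by lia.
  have -> : (m - k.+1).+1 = m - k by lia.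
  have : (m - k) * N <= m * (N - k) by nia.
  nia.
rewrite expnS mulnA; apply: leq_trans (leq_mul step (leqnn _)) _.
by rewrite -mulnA expnS [in X in _ <= X]mulnCA leq_mul2l IHk orbT.
Qed.

Section Counting.
Variable T : finType.

Lemma card_supsets_leq (A : {set T}) m : m <= #|T| ->
  #|[set S : {set T} | #|S| == m & A \subset S]| * #|T| ^ #|A| <= 'C(#|T|, m) * m ^ #|A|.
Proof.
move=> le_mT; have [lt_mA | le_Am] := ltnP m #|A|.
  suff -> : [set S : {set T} | #|S| == m & A \subset S] = set0 by rewrite cards0.
  apply/setP => S; rewrite !inE; apply/negbTE/negP => /andP[/eqP eq_Sm].
  by move/subset_leq_card; lia.
apply: leq_trans (bin_subn_mul_expn_leq le_Am le_mT); rewrite leq_mul2r orbC.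
have inj_D : {in [set S : {set T} | #|S| == m & A \subset S] &, injective (fun S => S :\: A)}.
  move=> S1 S2; rewrite !inE => /andP[_ sAS1] /andP[_ sAS2] /setP eqD.
  apply/setP => x; case xA: (x \in A).
    by rewrite (subsetP sAS1 _ xA) (subsetP sAS2 _ xA).
  by have := eqD x; rewrite !inE xA.
have -> : #|T| - #|A| = #|~: A| by rewrite -(cardsC A) addKn.
rewrite -(card_in_imset inj_D) -cards_draws subset_leq_card //.
apply/subsetP => S' /imsetP[S]; rewrite inE => /andP[/eqP eq_Sm sAS] ->.
rewrite inE cardsDS // eq_Sm eqxx andbT.
by apply/subsetP => x; rewrite !inE => /andP[].
Qed.

Lemma sum_card_contained (C : finType) (B : {set C}) (supp : C -> {set T})
    (D : {set {set T}}) :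
  \sum_(S in D) #|[set c in B | supp c \subset S]| =
  \sum_(c in B) #|[set S in D | supp c \subset S]|.
Proof.
have card_sum (U : finType) (X : {set U}) (P : pred U) :
    #|[set u in X | P u]| = \sum_(u in X) P u.
  rewrite -sum1_card big_mkcond [RHS]big_mkcond; apply: eq_bigr => u _.
  by rewrite inE; case: (u \in X); case: (P u).
under eq_bigr do rewrite card_sum.
by rewrite exchange_big; apply: eq_bigr => c _; rewrite card_sum.
Qed.

Lemma exists_subset_few_contained (C : finType) (B : {set C}) (supp : C -> {set T})
    k m :
  {in B, forall c, #|supp c| = k} -> m <= #|T| ->
  exists2 S : {set T}, #|S| = m &
    #|[set c in B | supp c \subset S]| * #|T| ^ k <= #|B| * m ^ k.
Proof.
move=> card_supp le_mT.
pose D := [set S : {set T} | #|S| == m].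
pose bad (S : {set T}) := #|[set c in B | supp c \subset S]|.
have cardD : #|D| = 'C(#|T|, m) by rewrite card_draws.
have D_gt0 : 0 < #|D| by rewrite cardD bin_gt0.
have [S0 S0D] := card_gt0P D_gt0.
have [S SD min_S] := arg_minnP bad S0D.
exists S; first by move: (SD : S \in D); rewrite inE => /eqP.
rewrite -(leq_pmul2r D_gt0) mulnAC.
have le_avg : bad S * #|D| <= \sum_(S' in D) bad S'.
  by rewrite mulnC -sum_nat_const; apply: leq_sum.
apply: leq_trans (leq_mul le_avg (leqnn _)) _.
rewrite sum_card_contained big_distrl -mulnA cardD -sum_nat_const /=.
apply: leq_sum => c cB.
have -> : [set S' in D | supp c \subset S'] =
          [set S' : {set T} | #|S'| == m & supp c \subset S'].
  by apply/setP => S'; rewrite !inE.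
by rewrite -(card_supp c cB) [leqRHS]mulnC card_supsets_leq.
Qed.

Lemma card_leq_sum_cover (I : finType) (F : {set T}) (P : I -> pred T) :
  {in F, forall x, exists i, P i x} -> #|F| <= \sum_i #|[set x in F | P i x]|.
Proof.
move=> covered.
rewrite -sum1_card (eq_bigr (fun i => \sum_(x in F) P i x)); last first.
  move=> i _; rewrite -sum1_card big_mkcond [RHS]big_mkcond; apply: eq_bigr => x _.
  by rewrite inE; case: (x \in F); case: (P i x).
rewrite exchange_big; apply: leq_sum => x xF.
have [i Pix] := covered x xF.
by rewrite (bigD1 i) //= Pix.
Qed.

Lemma card_pairs_leq (U : finType) (A : {set T * U}) b :
  (forall x, #|[set y | (x, y) \in A]| <= b) -> #|A| <= #|T| * b.
Proof.
move=> card_fibre.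
rewrite -sum1_card (partition_big fst xpredT) //= -sum_nat_const.
apply: leq_sum => x _; apply: leq_trans (card_fibre x).
rewrite -sum1_card (reindex (pair x)) /=.
  by apply: eq_leq; apply: eq_bigl => y; rewrite inE eqxx andbT.
exists snd => [y _ //|[x' y]]; rewrite inE /= => /andP[_ /eqP ->] //.
Qed.
End Counting.

Lemma leq_card_g_ff q r n (F : {set vec q n}) : ~~ contains_focal r F -> #|F| <= g_ff q r n.
Proof. exact: (@leq_bigmax_cond _ (fun F => ~~ contains_focal r F) (fun F => #|F|)). Qed.

Lemma subn_divn_leq_ceil_div k n : 0 < k -> n - n %/ k <= ceil_div ((k - 1) * n) k.
Proof.
move=> k_gt0; rewrite /ceil_div leq_divRL //.
have := divn_eq n k; have := ltn_pmod n k_gt0; nia.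
Qed.

Section UpperBound.
Variables q r n : nat.
Hypothesis r_gt1 : 1 < r.

Let r1_gt0 : 0 < r - 1. Proof. by rewrite subn_gt0. Qed.

Definition block_of (i : 'I_n) : 'I_(r - 1) := Ordinal (ltn_pmod i r1_gt0).

Definition block (j : 'I_(r - 1)) : {set 'I_n} := [set i | block_of i == j].

Definition agree_off j (x y : vec q n) := [forall i, (i \notin block j) ==> (x i == y i)].

Definition isolated_off (F : {set vec q n}) j x := [forall y in F, agree_off j x y ==> (y == x)].

Lemma focal_of_not_isolated (F : {set vec q n}) x :
  x \in F -> (forall j, ~~ isolated_off F j x) -> contains_focal r F.
Proof.
move=> xF not_isolated.
pose P j y := [&& y \in F, y != x & agree_off j x y].
have exP j : exists y, P j y.
  have /forallPn[y] := not_isolated j.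
  by rewrite !negb_imply => /and3P[yF agree_xy neq_yx]; exists y; apply/and3P.
pose y := [ffun j => xchoose (exP j)].
have Py j : P j (y j) by rewrite ffunE; apply: xchooseP.
have deviates_in_block j i : y j i != x i -> block_of i == j.
  case/and3P: (Py j) => _ _ /forallP/(_ i); rewrite inE.
  by case: eqP => //= _ /eqP ->; rewrite eqxx.
apply/existsP; exists x; apply/existsP; exists y.
rewrite xF /=; apply/andP; split.
- by apply/forallP => j; case/and3P: (Py j).
- apply/and3P; split.
  + apply/injectiveP => j1 j2 eq_y.
    case/and3P: (Py j1) => _ neq_yx _.
    have [i neq_i] : exists i, y j1 i != x i.
      apply/existsP; apply: contraR neq_yx => /existsPn agree.
      by apply/eqP/ffunP => i; apply/eqP/negbNE.
    have /eqP <- := deviates_in_block _ _ neq_i.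
    by rewrite eq_y in neq_i; have /eqP <- := deviates_in_block _ _ neq_i.
  + by apply/forallP => j; case/and3P: (Py j).
  + apply/forallP => i.
    have -> : r - 2 = #|[set~ block_of i]| by rewrite cardsC1 card_ord; lia.
    apply/subset_leq_card/subsetP => j; rewrite !inE => neq_j.
    by apply: contraR neq_j => /deviates_in_block; rewrite eq_sym.
Qed.

Lemma card_block j : n %/ (r - 1) <= #|block j|.
Proof.
have lt_n (t : 'I_(n %/ (r - 1))) : j + t * (r - 1) < n.
  by have := leq_divM n (r - 1); have := ltn_ord t; have := ltn_ord j; nia.
pose f t : 'I_n := Ordinal (lt_n t).
have inj_f : injective f.
  move=> t1 t2 /(congr1 val) /= /addnI /eqP.
  by rewrite eqn_mul2r eqn0Ngt r1_gt0 => /val_eqP.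
rewrite -[X in X <= _]card_ord -cardsT -(card_imset _ inj_f).
apply/subset_leq_card/subsetP => _ /imsetP[t _ ->]; rewrite inE.
by apply/eqP/val_inj; rewrite /= addnC modnMDl modn_small.
Qed.

Lemma card_isolated_off (F : {set vec q n}) j :
  #|[set x in F | isolated_off F j x]| <= q ^ (n - #|block j|).
Proof.
pose restr (x : vec q n) : {ffun {i | i \notin block j} -> 'I_q} := [ffun i => x (val i)].
have inj_restr : {in [set x in F | isolated_off F j x] &, injective restr}.
  move=> x y; rewrite !inE => /andP[_ /forallP x_isolated] /andP[yF _] eq_restr.
  apply/esym/eqP; move/implyP: (x_isolated y); rewrite yF => /(_ isT)/implyP; apply.
  apply/forallP => i; apply/implyP => i_out.
  by move/ffunP/(_ (exist _ i i_out)): eq_restr; rewrite !ffunE /= => ->.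
rewrite -(card_in_imset inj_restr); apply: leq_trans (max_card _) _.
have := cardsC (block j); rewrite card_ord => card_n.
have -> : n - #|block j| = #|~: block j| by lia.
rewrite card_ffun card_ord card_sig; apply: eq_leq; congr (_ ^ _).
by apply: eq_card => i; rewrite !inE.
Qed.

Hypothesis q_gt0 : 0 < q.

Lemma card_focal_free (F : {set vec q n}) :
  ~~ contains_focal r F -> #|F| <= (r - 1) * q ^ (n - n %/ (r - 1)).
Proof.
move=> focal_free.
have covered : {in F, forall x, exists j, isolated_off F j x}.
  move=> x xF; apply/existsP; apply: contraNT focal_free => /existsPn.
  exact: focal_of_not_isolated.
apply: leq_trans (card_leq_sum_cover covered) _.
rewrite -[r - 1 in X in X * _]card_ord -sum_nat_const; apply: leq_sum => j _.
apply: leq_trans (card_isolated_off F j) _.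
by rewrite leq_pexp2l // leq_sub2l // card_block.
Qed.

Lemma g_ff_leq : g_ff q r n <= (r - 1) * q ^ ceil_div ((r - 2) * n) (r - 1).
Proof.
apply/bigmax_leqP => F focal_free; apply: leq_trans (card_focal_free focal_free) _.
rewrite leq_mul2l leq_pexp2l ?orbT //.
by have := subn_divn_leq_ceil_div n r1_gt0; rewrite -subnDA.
Qed.
End UpperBound.

Lemma card_vec q n : #|{: vec q n}| = q ^ n.
Proof. by rewrite card_ffun !card_ord. Qed.

Section LowerBound.
Variables q r n : nat.

Definition focal_config := (vec q n * {ffun 'I_(r - 1) -> vec q n})%type.

Definition focal_configs : {set focal_config} := [set c | focalb c.1 c.2].

Definition focal_support (c : focal_config) : {set vec q n} :=
  c.1 |: [set c.2 j | j : 'I_(r - 1)].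

Hypothesis r_gt0 : 0 < r.

Lemma card_focal_support c : c \in focal_configs -> #|focal_support c| = r.
Proof.
rewrite inE => /and3P[/injectiveP inj_y /forallP neq_y _].
rewrite cardsU1 card_imset // card_ord.
suff -> : c.1 \notin [set c.2 j | j : 'I_(r - 1)] by rewrite add1n subn1 prednK.
by apply/imsetP => -[j _ eq_c]; move: (neq_y j); rewrite -eq_c eqxx.
Qed.

Lemma focal_deviation_uniq (x0 : vec q n) (y : {ffun 'I_(r - 1) -> vec q n}) i j1 j2 :
  focalb x0 y -> y j1 i != x0 i -> y j2 i != x0 i -> j1 = j2.
Proof.
case/and3P => _ _ /forallP/(_ i) card_agree dev1 dev2.
have [//|neq_j] := eqVneq j1 j2; exfalso.
have sub_agree : [set j | y j i == x0 i] \subset ~: [set j1; j2].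
  apply/subsetP => j; rewrite !inE => /eqP agree_j.
  by apply/negP => /orP[] /eqP eq_j; [move: dev1 | move: dev2]; rewrite -eq_j agree_j eqxx.
have := leq_trans card_agree (subset_leq_card sub_agree).
by have := cardsC [set j1; j2]; rewrite cards2 neq_j card_ord /=; lia.
Qed.

Definition focal_columns := (q - 1) * (r - 1) + 1.

Definition deviation_alphabet (a : 'I_q) : {set option ('I_(r - 1) * 'I_q)} :=
  None |: [set Some p | p in setX [set: 'I_(r - 1)] [set~ a]].

Lemma card_deviation_alphabet a : #|deviation_alphabet a| = focal_columns.
Proof.
rewrite cardsU1 card_imset; last by move=> ? ? [].
rewrite cardsX cardsT cardsC1 !card_ord.
suff -> : None \notin [set Some p | p in setX [set: 'I_(r - 1)] [set~ a]].
  by rewrite /focal_columns mulnC -subn1 addnC.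
by apply/imsetP => -[].
Qed.

Definition deviation_code (x0 : vec q n) (y : {ffun 'I_(r - 1) -> vec q n}) :
    {ffun 'I_n -> option ('I_(r - 1) * 'I_q)} :=
  [ffun i => if [pick j | y j i != x0 i] is Some j then Some (j, y j i) else None].

Lemma card_focal_with_focus (x0 : vec q n) :
  #|[set y : {ffun 'I_(r - 1) -> vec q n} | focalb x0 y]| <= focal_columns ^ n.
Proof.
set focal_with_x0 := [set y | focalb x0 y].
have inj_code : {in focal_with_x0 &, injective (deviation_code x0)}.
  move=> y1 y2; rewrite !inE => focal1 focal2 /ffunP eq_code.
  apply/ffunP => j; apply/ffunP => i; move: (eq_code i); rewrite !ffunE.
  case: pickP => [j1 dev1|agree1]; case: pickP => [j2 dev2|agree2] //; last first.
    by move: (agree1 j) (agree2 j) => /negbFE/eqP -> /negbFE/eqP ->.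
  case=> eq_j12 eq_entry; subst j2.
  have [<- //|neq_j] := eqVneq j1 j.
  have agree y (focal : focalb x0 y) (dev : y j1 i != x0 i) : y j i = x0 i.
    by apply/eqP; apply: contraNT neq_j => /(focal_deviation_uniq focal dev) ->.
  by rewrite (agree _ focal1 dev1) (agree _ focal2 dev2).
rewrite -(card_in_imset inj_code).
have : deviation_code x0 @: focal_with_x0 \subset family (fun i => mem (deviation_alphabet (x0 i))).
  apply/subsetP => _ /imsetP[y _ ->]; apply/familyP => i.
  rewrite ffunE; case: pickP => [j dev|_] /=; rewrite !inE //.
  by apply/orP; right; apply/imsetP; exists (j, y j i); rewrite ?inE.
move/subset_leq_card; rewrite card_family foldrE big_map big_enum /=.
under eq_bigr => i _ do rewrite card_deviation_alphabet.
by rewrite prod_nat_const card_ord.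
Qed.

Lemma card_focal_configs : #|focal_configs| <= q ^ n * focal_columns ^ n.
Proof.
rewrite -card_vec; apply: card_pairs_leq => x0.
apply: leq_trans (card_focal_with_focus x0).
by apply: eq_leq; apply: eq_card => y; rewrite !inE.
Qed.

Lemma focal_free_setD_foci (S : {set vec q n}) :
  ~~ contains_focal r
       (S :\: [set c.1 | c in [set c in focal_configs | focal_support c \subset S]]).
Proof.
apply/negP => /existsP[x0] /existsP[y] /and3P[x0S /forallP yS focal].
case/setDP: (x0S) => _ /imsetP[]; exists (x0, y) => //.
rewrite !inE focal /=; apply/subsetP => v; rewrite !inE.
case/orP => [/eqP -> | /imsetP[j _ ->]]; first by case/setDP: x0S.
by case/setDP: (yS j).
Qed.

Lemma g_ff_ge_half m :
  m <= q ^ n -> 2 * focal_columns ^ n * m ^ (r - 1) <= (q ^ n) ^ (r - 1) ->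
  m <= 2 * g_ff q r n.
Proof.
move=> le_mN sparse; have [-> //|m_gt0] := posnP m.
have le_mT : m <= #|{: vec q n}| by rewrite card_vec.
have [S card_S] := exists_subset_few_contained card_focal_support le_mT.
set bad := [set c in focal_configs | focal_support c \subset S]; rewrite card_vec => few_bad.
have le_g := leq_card_g_ff (focal_free_setD_foci S); rewrite -/bad in le_g.
have : #|S| - #|bad| <= #|S :\: [set c.1 | c in bad]|.
  rewrite cardsD leq_sub2l //.
  exact: leq_trans (subset_leq_card (subsetIr S _)) (leq_imset_card _ bad).
suff : 2 * #|bad| <= m by lia.
have le_B := card_focal_configs.
have N_gt0 : 0 < q ^ n := leq_trans m_gt0 le_mN.
have expr_pred k : k ^ r = k * k ^ (r - 1) by rewrite -expnS subn1 prednK.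
rewrite !expr_pred in few_bad.
have NP_gt0 : 0 < q ^ n * (q ^ n) ^ (r - 1) by rewrite muln_gt0 N_gt0 expn_gt0 N_gt0.
rewrite -(leq_pmul2r NP_gt0) -mulnA.
apply: leq_trans (leq_mul (leqnn 2) few_bad) _.
have := leq_mul le_B (leqnn (m * m ^ (r - 1))).
have := leq_mul sparse (leqnn (q ^ n * m)).
nia.
Qed.
End LowerBound.

Lemma g_ff_gt0 q r n : 0 < q -> 1 < r -> 0 < g_ff q r n.
Proof.
move=> q_gt0 r_gt1; rewrite -(cards1 ([ffun=> Ordinal q_gt0] : vec q n)) leq_card_g_ff //.
apply/negP => /existsP[x0] /existsP[y] /and3P[x0F /forallP yF /and3P[_ /forallP neq_y _]].
have r1_gt0 : 0 < r - 1 by rewrite subn_gt0.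
move: (yF (Ordinal r1_gt0)) (neq_y (Ordinal r1_gt0)); rewrite !inE => /eqP ->.
by move: x0F; rewrite inE => /eqP ->; rewrite eqxx.
Qed.

Lemma g_ff_lower_nat q r n : 1 < r ->
  exists m, m <= 2 * g_ff q r n /\
            (q ^ n) ^ (r - 1) < 2 * focal_columns q r ^ n * m.+1 ^ (r - 1).
Proof.
move=> r_gt1; have r1_gt0 : 0 < r - 1 by rewrite subn_gt0.
pose sparse m := 2 * focal_columns q r ^ n * m ^ (r - 1) <= (q ^ n) ^ (r - 1).
have sparse0 : sparse 0 by rewrite /sparse exp0n // muln0.
have sparse_le m : sparse m -> m <= q ^ n.
  move=> sparse_m; rewrite -(leq_exp2r _ _ r1_gt0); apply: leq_trans sparse_m.
  by rewrite leq_pmull // muln_gt0 expn_gt0 /focal_columns addn1.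
have [m sparse_m max_m] := ex_maxnP (ex_intro _ 0 sparse0) sparse_le.
exists m; split; last by rewrite ltnNge; apply/negP => /max_m; rewrite ltnn.
exact: (@g_ff_ge_half q r n (ltnW r_gt1) m (sparse_le m sparse_m) sparse_m).
Qed.

(* Imported last because Reals rebinds [_ ^ _] in nat_scope to [Nat.pow]. *)
From Stdlib Require Import Reals Lra.

Lemma natpowE a b : Nat.pow a b = expn a b.
Proof. by elim: b => [|b IHb]; rewrite ?expn0 // expnS -IHb. Qed.

Lemma INR_expn a b : INR (expn a b) = (INR a ^ b)%R.
Proof. by rewrite -natpowE pow_INR. Qed.

Lemma pow_ratio_root_lt a K k n m : 0 < K -> 0 < k ->
  expn (expn a n) k < 2 * expn K n * expn m.+1 k ->
  ((INR a / Rpower (INR K) (/ INR k)) ^ n < 2 * INR m.+1)%R.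
Proof.
move=> K_gt0 k_gt0 lt_nat.
have K_gtR : (0 < INR K)%R by apply: (lt_INR 0); apply/ltP.
have k_neq0 : INR k <> 0%R by apply: not_0_INR; lia.
set root := Rpower (INR K) (/ INR k).
have root_gt0 : (0 < root)%R by apply: exp_pos.
have root_pow : (root ^ k = INR K)%R.
  by rewrite -Rpower_pow // Rpower_mult Rinv_l // Rpower_1.
set x := ((INR a / root) ^ n)%R.
have x_ge0 : (0 <= x)%R.
  by apply: pow_le; apply: Rle_mult_inv_pos => //; apply: pos_INR.
have x_pow : (x ^ k * INR K ^ n = (INR a ^ n) ^ k)%R.
  rewrite -root_pow /x -!pow_mult (Nat.mul_comm k n) -Rpow_mult_distr.
  by rewrite /Rdiv Rmult_assoc Rinv_l ?Rmult_1_r //; apply: Rgt_not_eq.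
apply: Rnot_le_lt; rewrite S_INR => le_x.
have := lt_INR _ _ (elimT ltP lt_nat); rewrite !mult_INR !INR_expn (S_INR m) [INR 2]/= -x_pow.
apply: Rle_not_lt.
have two_le : (2 <= 2 ^ k)%R by rewrite -{1}(pow_1 2); apply: Rle_pow; [lra | apply/leP].
have : (2 * (INR m + 1) ^ k <= x ^ k)%R.
  apply: Rle_trans (pow_incr _ _ k (conj _ le_x)); last by have := pos_INR m; lra.
  by rewrite Rpow_mult_distr; apply: Rmult_le_compat_r => //; apply: pow_le; have := pos_INR m; lra.
have := pow_lt _ n K_gtR; nra.
Qed.

Theorem theorem3p1 (q r : nat) (hq : 2 <= q) (hr : 3 <= r) :
  exists c : R, (0 < c)%R /\
    forall n : nat, 1 <= n ->
      (c * (INR q / Rpower (INR ((q - 1) * (r - 1) + 1)) (/ INR (r - 1))) ^ n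
         <= INR (g_ff q r n))%R /\
      g_ff q r n <= (r - 1) * q ^ ceil_div ((r - 2) * n) (r - 1).
Proof.
have r_gt1 : 1 < r by apply: ltnW.
have q_gt0 : 0 < q by apply: ltnW.
have r1_gt0 : 0 < r - 1 by rewrite subn_gt0.
have K_gt0 : 0 < focal_columns q r by rewrite /focal_columns addn1.
exists (/ 8)%R; split; first lra.
move=> n _; split; last by rewrite natpowE; apply: g_ff_leq.
have [m [le_m_g sparse_succ]] := @g_ff_lower_nat q r n r_gt1.
have := pow_ratio_root_lt K_gt0 r1_gt0 sparse_succ.
have le_nat : 2 * m.+1 <= 8 * g_ff q r n by have := @g_ff_gt0 q r n q_gt0 r_gt1; lia.
have := le_INR _ _ (elimT leP le_nat); rewrite !mult_INR [INR 2]/= [INR 8]/=.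
rewrite /focal_columns; lra.
Qed.
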